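(* Let $d,\ell,m$ be positive integers with $m\ge\ell$. Let $H=(V,E)$ be an almost-acyclic $k$-uniform hypergraph with $m$ edges in which every edge is incident to at most $d$ other edges. Then $$\sum_{E'\subseteq E}|\mathcal B_\ell(E')|\le\Big(\frac{(15dN^k)^4m}{\ell}\Big)^{\ell/2}.$$
   Context: $N\ge2$, $\mathbb Z_N=\mathbb Z/N\mathbb Z$. A $k$-uniform hypergraph $(V,E)$ has finite vertex set $V$ and a set $E$ of edges, each an ordered $k$-tuple of distinct vertices; two edges are incident if they share a vertex. It is almost-acyclic if for every $\ell'\ge0$, any $\ell'$ distinct edges together cover at least $\ell'(k-1.1)$ vertices. For $y\in\mathbb Z_N^V$, $\|y\|_{\mathsf H}$ is the number of nonzero coordinates. For $E'\subseteq E$, $\mathcal B(E')$ is the set of maps $B:E'\to\mathbb Z_N^V$ such that for each $e=(v_1,\dots,v_k)\in E'$, $\mathrm{supp}(B(e))\subseteq\{v_1,\dots,v_k\}$ and $|\mathrm{supp}(B(e))|\ge3$; $\Sigma B=\sum_{e\in E'}B(e)$; and $\mathcal B_\ell(E')=\{B\in\mathcal B(E'):\|\Sigma B\|_{\mathsf H}=\ell\}$. *)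

From Stdlib Require Import Reals.
From mathcomp Require Import all_boot all_algebra.
Set Implicit Arguments. Unset Strict Implicit. Unset Printing Implicit Defensive.
Import GRing.Theory.

(* Vertices: a finite type V.  Edges of a k-uniform hypergraph: ordered
   k-tuples of vertices (distinctness imposed as a hypothesis: uniq e). *)

Definition incident (V : finType) (k : nat) (e f : k.-tuple V) : bool :=
  has (fun v => v \in f) e.

Definition covered (V : finType) (k : nat) (F : {set k.-tuple V}) : {set V} :=
  [set v | [exists e in F, v \in e]].

Definition almost_acyclic (V : finType) (k : nat) (E : {set k.-tuple V}) : Prop :=
  forall F : {set k.-tuple V}, F \subset E ->
    Rle (Rmult (INR #|F|) (Rminus (INR k) (Rdiv (INR 11) (INR 10)))) (INR #|covered F|).

Definition hweight (V : finType) (N : nat) (y : {ffun V -> 'Z_N}) : nat :=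
  #|[set v | y v != 0%R]|.

Definition supp (V : finType) (N : nat) (y : {ffun V -> 'Z_N}) : {set V} :=
  [set v | y v != 0%R].

Definition edges_of (V : finType) (k : nat) (E' : {set k.-tuple V}) :=
  {e : k.-tuple V | e \in E'}.

Definition is_B (V : finType) (k N : nat) (E' : {set k.-tuple V})
    (B : {ffun edges_of E' -> {ffun V -> 'Z_N}}) : bool :=
  [forall e : edges_of E',
     (supp (B e) \subset [set v | v \in val e]) && (3 <= #|supp (B e)|)].

Definition SigmaB (V : finType) (k N : nat) (E' : {set k.-tuple V})
    (B : {ffun edges_of E' -> {ffun V -> 'Z_N}}) : {ffun V -> 'Z_N} :=
  (\sum_(e : edges_of E') B e)%R.

Definition B_l (V : finType) (k N l : nat) (E' : {set k.-tuple V})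
    : {set {ffun edges_of E' -> {ffun V -> 'Z_N}}} :=
  [set B | is_B B && (hweight (SigmaB B) == l)].

Local Open Scope R_scope.
Definition B_bound (d N k m l : nat) : R :=
  Rpower ((15 * INR d * INR N ^ k) ^ 4 * INR m / INR l) (INR l / 2).
Close Scope R_scope.

(* Weight a pair (A, B), with A a set of edges and B in B(A), by
   u ^ |Sigma B| * z ^ |A|, and let Phi(U) be the total weight of the pairs with
   A inside U.  Almost-acyclicity makes few vertices shared between edges, so
   |Sigma B| >= 4|A|/5, and |Sigma B| >= 2 as soon as A is nonempty.  The
   connected component C of A containing a fixed edge r contributes its own
   factor, because the other edges of A share no vertex with C; hence
   Phi(U) <= Phi(U - r) (1 + u^2 W), where W counts the connected edge sets
   through r with weight (N^k z)^|C|.  The usual tree recursion bounds W by any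
   a with N^k z (1 + a)^d <= a, so Phi(E) <= (1 + u^2 a)^m, while the pairs
   counted by the theorem have weight at least u^l z^(2l).  Taking
   u = sqrt(l/m), z = 1/(3 d N^k) and a = 1/d gives the bound. *)

From Stdlib Require Import Reals Lra Lia.
From mathcomp Require Import all_boot all_algebra.
From mathcomp Require Import zify.
From mathcomp Require Import Rstruct.
Set Implicit Arguments. Unset Strict Implicit. Unset Printing Implicit Defensive.
Import mathcomp.order.order.Order.TTheory GRing.Theory Num.Theory.

Section Components.
Variables (T : finType) (inc : rel T).
Implicit Types (A C : {set T}) (x r f a b g : T).

Definition induced_rel A : rel T := fun a b => [&& a \in A, b \in A & inc a b].
Definition component A x := [set g | connect (induced_rel A) x g].
Definition rooted_connected A x := (x \in A) && (A \subset component A x).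

Lemma connect_forward_closed (e : rel T) (P : pred T) x y :
  P x -> (forall a b, P a -> e a b -> P b) -> connect e x y -> P y.
Proof.
move=> Px step /connectP [p pth ->]; elim: p x Px pth => //= b p IH a Pa /andP[eab pth].
exact: IH (step _ _ Pa eab) pth.
Qed.

Lemma component_sub A x : x \in A -> component A x \subset A.
Proof.
move=> xA; apply/subsetP => g; rewrite inE.
by apply: (connect_forward_closed (P := mem A)) => // a b _ /and3P[].
Qed.

Lemma component_closed A x a b :
  a \in component A x -> b \in A -> a \in A -> inc a b -> b \in component A x.
Proof.
rewrite !inE => xa bA aA iab; apply: connect_trans xa (connect1 _).
by rewrite /induced_rel aA bA iab.
Qed.

Lemma component_connected A x : x \in A -> rooted_connected (component A x) x.
Proof.
move=> xA; rewrite /rooted_connected inE connect0 /=; apply/subsetP => g.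
rewrite !inE => cg.
pose P h := (h \in component A x) && connect (induced_rel (component A x)) x h.
suff /andP[] : P g by [].
apply: (connect_forward_closed (P := P) _ _ cg); first by rewrite /P inE !connect0.
move=> a b /andP[ca cca] /and3P[aA bA iab].
have cb : b \in component A x by apply: component_closed ca bA aA iab.
rewrite /P cb /=; apply: connect_trans cca (connect1 _).
by rewrite /induced_rel ca cb iab.
Qed.

Lemma rooted_connected_split C r f : rooted_connected C r -> f \in C -> f != r ->
  let C1 := component (C :\ r) f in
  [/\ rooted_connected C1 f, C1 \subset C :\ r & rooted_connected (C :\: C1) r].
Proof.
move=> /andP[rC Csub] fC fr C1.
have fC' : f \in C :\ r by rewrite !inE fr fC.
have s1 : C1 \subset C :\ r by apply: component_sub.
have rn1 : r \notin C1 by apply/negP => /(subsetP s1); rewrite !inE eqxx.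
split => //; first exact: component_connected.
rewrite /rooted_connected in_setD rn1 rC /=; apply/subsetP => g.
rewrite in_setD => /andP[gn1 gC].
pose P h := (h \in C1) || connect (induced_rel (C :\: C1)) r h.
suff : P g by rewrite /P (negbTE gn1) inE.
have := subsetP Csub g gC; rewrite inE => cg.
apply: (connect_forward_closed (P := P) _ _ cg); first by rewrite /P connect0 orbT.
move=> a b Pa /and3P[aC bC iab].
rewrite /P; case b1: (b \in C1) => //=.
case a1: (a \in C1).
  case: (eqVneq b r) => [->|br]; first exact: connect0.
  suff : b \in C1 by rewrite b1.
  apply: (component_closed (a := a)) iab => //; first by rewrite !inE br bC.
  exact: (subsetP s1 a a1).
move: Pa; rewrite /P a1 /= => ca; apply: connect_trans ca (connect1 _).
by rewrite /induced_rel !in_setD a1 b1 aC bC iab.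
Qed.

End Components.

Lemma setDUK (T : finType) (A B : {set T}) : B \subset A -> A :\: B :|: B = A.
Proof. by move=> sBA; rewrite setUC -{1}(setIidPr sBA) setID. Qed.

Section SumInj.
Local Open Scope ring_scope.

Lemma ler_sum_inj (R : numDomainType) (I J : finType) (P : pred I) (Q : pred J)
    (h : I -> J) (F : J -> R) :
  {in P &, injective h} -> (forall i, P i -> Q (h i)) -> (forall j, Q j -> 0 <= F j) ->
  \sum_(i | P i) F (h i) <= \sum_(j | Q j) F j.
Proof.
move=> hinj hQ F0; set S := h @: [set i | P i].
have -> : \sum_(i | P i) F (h i) = \sum_(j | Q j && (j \in S)) F j.
  transitivity (\sum_(j in S) F j).
    rewrite big_imset /=; last by move=> x y; rewrite !inE; exact: hinj.
    by apply: eq_bigl => i; rewrite inE.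
  apply: eq_bigl => j; case jS: (j \in S); rewrite ?andbF ?andbT //.
  by case/imsetP: jS => i; rewrite inE => /hQ Pi ->.
rewrite [X in _ <= X](bigID (fun j => j \in S)) /= lerDl.
by apply: sumr_ge0 => j /andP[/F0].
Qed.

End SumInj.

Section ConnectedWeight.
Variables (T : finType) (inc : rel T) (R : realFieldType) (y : R).
Local Open Scope ring_scope.
Implicit Types (U C : {set T}) (r f : T).

Definition conn_weight U r :=
  \sum_(C : {set T} | (C \subset U) && rooted_connected inc C r) y ^+ #|C|.
Definition nbhd U r := [set f in U | (f != r) && inc r f].

Hypothesis y_ge0 : 0 <= y.

Lemma conn_weight_ge0 U r : 0 <= conn_weight U r.
Proof. by apply: sumr_ge0 => C _; apply: exprn_ge0. Qed.

(* A connected set through [r] either avoids the neighbour [f], or splits into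
   the component of [f] away from [r] and a connected remainder avoiding [f]. *)
Lemma conn_weight_splitD1 U r f : f \in U -> f != r ->
  conn_weight U r <= conn_weight (U :\ f) r * (1 + conn_weight (U :\ r) f).
Proof.
move=> fU fr.
rewrite mulrDr mulr1 /conn_weight (bigID (fun C => f \in C)) /= addrC.
apply: lerD; first by rewrite le_eqVlt; apply/orP; left; apply/eqP;
  apply: eq_bigl => C; rewrite subsetD1 andbAC.
rewrite big_distrlr /= pair_big_dep /=.
pose peel C := (C :\: component inc (C :\ r) f, component inc (C :\ r) f).
have comp_sub C : rooted_connected inc C r -> f \in C ->
    component inc (C :\ r) f \subset C.
  move=> cC fC; have [_ s1 _] := rooted_connected_split cC fC fr.
  exact: subset_trans s1 (subsetDl _ _).
rewrite (eq_bigr (fun C => y ^+ #|(peel C).1| * y ^+ #|(peel C).2|)); last first.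
  move=> C /andP[/andP[_ cC] fC].
  rewrite /peel /= -exprD addnC -(cardsID (component inc (C :\ r) f) C).
  by rewrite (setIidPr (comp_sub C cC fC)).
apply: (ler_sum_inj (h := peel) (F := fun p => y ^+ #|p.1| * y ^+ #|p.2|)).
- move=> C C' /andP[/andP[_ cC] fC] /andP[/andP[_ cC'] fC'] [e1 e2].
  by rewrite -(setDUK (comp_sub C cC fC)) -(setDUK (comp_sub C' cC' fC')) e1 e2.
- move=> C /andP[/andP[CU cC] fC].
  have [c1 s1 c2] := rooted_connected_split cC fC fr.
  rewrite /peel /= c1 c2 !andbT subsetD1 (subset_trans (subsetDl _ _) CU) /=.
  have fc1 : f \in component inc (C :\ r) f by case/andP: c1.
  by rewrite in_setD fc1 /= (subset_trans s1 (setSD _ CU)).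
- by move=> p _; rewrite mulr_ge0 ?exprn_ge0.
Qed.

Lemma conn_weight_isolated U r : r \in U -> nbhd U r = set0 -> conn_weight U r = y.
Proof.
move=> rU nb0; rewrite /conn_weight (big_pred1 [set r]) ?cards1 ?expr1 //.
move=> C /=; apply/idP/idP; last first.
  move/eqP->; rewrite sub1set rU /rooted_connected set11 /=; apply/subsetP => g.
  by rewrite !inE => /eqP ->; exact: connect0.
case/andP=> CU /andP[rC Cs]; apply/eqP/setP => g; rewrite inE.
apply/idP/idP; last by move/eqP->.
move=> gC; have := subsetP Cs g gC; rewrite inE.
apply: (connect_forward_closed (P := pred1 r)) => //= a b /eqP -> /and3P[_ bC irb].
apply/negPn/negP => br.
have : b \in nbhd U r by rewrite inE (subsetP CU b bC) br irb.
by rewrite nb0 inE.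
Qed.

Variables (E : {set T}) (d : nat) (a : R).
Hypotheses (a_ge0 : 0 <= a) (y_fix : y * (1 + a) ^+ d <= a)
  (deg_le : forall e, e \in E -> (#|nbhd E e| <= d)%N).

Lemma nbhd_fix_le U r : U \subset E -> r \in U -> y * (1 + a) ^+ #|nbhd U r| <= a.
Proof.
move=> UE rU; apply: le_trans y_fix; apply: ler_wpM2l y_ge0 _ _ _.
apply: ler_weXn2l; first by rewrite lerDl.
apply: leq_trans (deg_le (subsetP UE r rU)); apply: subset_leq_card.
by apply/subsetP => g; rewrite !inE => /and3P[gU -> ->]; rewrite (subsetP UE g gU).
Qed.

Lemma conn_weight_le_nbhd U r : U \subset E -> r \in U ->
  conn_weight U r <= y * (1 + a) ^+ #|nbhd U r|.
Proof.
elim: {U}#|U| {-2}U (leqnn #|U|) r => [|n IH] U.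
  by rewrite leqn0 => /eqP/cards0_eq -> r _; rewrite inE.
move=> cU r UE rU.
have [nb0|[f fnb]] := set_0Vmem (nbhd U r).
  by rewrite conn_weight_isolated // nb0 cards0 expr0 mulr1.
move: (fnb); rewrite inE => /and3P[fU fr _].
apply: le_trans (conn_weight_splitD1 fU fr) _.
have cUf : (#|U :\ f| <= n)%N by move: cU; rewrite (cardsD1 f U) fU.
have cUr : (#|U :\ r| <= n)%N by move: cU; rewrite (cardsD1 r U) rU.
have UfE : U :\ f \subset E by apply: subset_trans (subsetDl _ _) UE.
have UrE : U :\ r \subset E by apply: subset_trans (subsetDl _ _) UE.
have rUf : r \in U :\ f by rewrite !inE eq_sym fr rU.
have fUr : f \in U :\ r by rewrite !inE fr fU.
have Wf := IH _ cUf r UfE rUf.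
have Wr := le_trans (IH _ cUr f UrE fUr) (nbhd_fix_le UrE fUr).
have nbf : nbhd (U :\ f) r = nbhd U r :\ f.
  by apply/setP => g; rewrite !inE; case: (g == f); rewrite ?andbF.
rewrite (cardsD1 f (nbhd U r)) fnb -nbf add1n exprS mulrCA [X in X <= _]mulrC.
apply: ler_pM _ (conn_weight_ge0 _ _) _ Wf; first by rewrite addr_ge0 ?ler01 ?conn_weight_ge0.
by rewrite lerD2l.
Qed.

Lemma conn_weight_le U r : U \subset E -> r \in U -> conn_weight U r <= a.
Proof. by move=> UE rU; apply: le_trans (conn_weight_le_nbhd UE rU) (nbhd_fix_le UE rU). Qed.

End ConnectedWeight.

Lemma card_set_sum (X : finType) (P : pred X) : #|[set x | P x]| = (\sum_x P x)%N.
Proof.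
by rewrite -sum1_card big_mkcond /=; apply: eq_bigr => x _; rewrite inE; case: (P x).
Qed.

Section Hypergraph.
Variables (V : finType) (k N : nat).
Local Notation T := (k.-tuple V).
Local Notation Vec := {ffun V -> 'Z_N}.
Implicit Types (A C U : {set T}) (B : {ffun T -> Vec}) (e : T) (v : V).

Definition incident_rel : rel T := fun e f => incident e f.

(* [B(A)] with the maps extended by zero to all edges, so that the sets for
   different [A] live in one type. *)
Definition assignments A : {set {ffun T -> Vec}} :=
  [set B : {ffun T -> Vec} | [forall e, if e \in A
     then (supp (B e) \subset [set v | v \in e]) && (3 <= #|supp (B e)|)
     else B e == 0%R]].
Definition sumB A B : Vec := (\sum_(e in A) B e)%R.

Lemma assignmentsP A B e : B \in assignments A -> if e \in A
   then (supp (B e) \subset [set v | v \in e]) && (3 <= #|supp (B e)|) else B e == 0%R.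
Proof. by rewrite inE => /forallP/(_ e). Qed.

Lemma assignment_supp A B e v : B \in assignments A -> B e v != 0%R -> v \in e.
Proof.
move=> /(assignmentsP e); case: (e \in A).
  by case/andP => /subsetP s _ h; have := s v; rewrite !inE; apply.
by move=> /eqP ->; rewrite ffunE eqxx.
Qed.

Lemma sumB_neq0 A B v : sumB A B v != 0%R -> exists2 e, e \in A & B e v != 0%R.
Proof.
move=> H; have [/exists_inP[e]|/exists_inPn h] := boolP [exists e in A, B e v != 0%R].
  by exists e.
by move: H; rewrite /sumB sum_ffunE big1 ?eqxx // => e /h /negbNE/eqP.
Qed.

Definition edge_deg C v := (\sum_(e in C) (v \in e))%N.
Definition excess C := (\sum_v (edge_deg C v).-1)%N.
Definition shared C e := [set v | (v \in e) && (1 < edge_deg C v)].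

Lemma edge_deg_le C v : (edge_deg C v <= #|C|)%N.
Proof. by rewrite /edge_deg -sum1_card; apply: leq_sum => e _; case: (v \in e). Qed.

Lemma edge_deg_ge2 C v e0 e : e0 \in C -> e \in C -> e != e0 -> v \in e0 -> v \in e ->
  (1 < edge_deg C v)%N.
Proof.
move=> e0C eC ne ve0 ve; rewrite /edge_deg (bigD1 e0) //= (bigD1 e) /=; last by rewrite eC ne.
by rewrite ve0 ve.
Qed.

Lemma sum_edge_deg C : (forall e, e \in C -> uniq e) ->
  (\sum_v edge_deg C v = k * #|C|)%N.
Proof.
move=> uniqC; rewrite /edge_deg exchange_big /= mulnC -sum_nat_const.
apply: eq_bigr => e eC; rewrite -card_set_sum cardsE.
by have /card_uniqP -> := uniqC e eC; exact: size_tuple.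
Qed.

Lemma card_covered C : #|covered C| = (\sum_v (0 < edge_deg C v))%N.
Proof.
rewrite /covered card_set_sum; apply: eq_bigr => v _; congr nat_of_bool.
apply/idP/idP => [/exists_inP[e eC ve]|].
  by rewrite /edge_deg (bigD1 e) //= ve.
rewrite lt0n; apply: contraR => /exists_inPn h; rewrite sum_nat_eq0.
by apply/forall_inP => e eC; have := h e eC; case: (v \in e).
Qed.

Lemma sum_shared_le_excess C : (\sum_(e in C) #|shared C e| <= 2 * excess C)%N.
Proof.
rewrite /excess big_distrr /=.
rewrite (eq_bigr (fun e => \sum_v ((v \in e) && (1 < edge_deg C v)) : nat)%N); last first.
  by move=> e _; rewrite -card_set_sum.
rewrite exchange_big /=; apply: leq_sum => v _.
case: (ltnP 1 (edge_deg C v)) => dv; last by rewrite big1 // => e _; rewrite andbF.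
rewrite (eq_bigr (fun e => (v \in e) : nat)); last by move=> e _; rewrite andbT.
by change (edge_deg C v <= 2 * (edge_deg C v).-1)%N; lia.
Qed.

Lemma shared_small C e : (#|C| <= 1)%N -> shared C e = set0.
Proof.
move=> c1; apply/setP => v; rewrite !inE; apply/negbTE/andP => -[_].
by have := edge_deg_le C v; lia.
Qed.

Section WeightLowerBound.
Variables (C : {set T}) (B : {ffun T -> Vec}).
Hypothesis BC : B \in assignments C.
Local Notation w := (hweight (sumB C B)).

(* At a vertex lying in a single edge of [C] no cancellation in [sumB] can occur. *)
Lemma sum_private_supp_le_weight :
  (\sum_(e in C) #|[set v | (v \in supp (B e)) && (edge_deg C v == 1%N)]| <= w)%N.
Proof.
rewrite (eq_bigr (fun e => \sum_v ((v \in supp (B e)) && (edge_deg C v == 1%N)) : nat)%N);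
  last by move=> e _; rewrite card_set_sum.
rewrite exchange_big /= /hweight card_set_sum; apply: leq_sum => v _.
case: (eqVneq (edge_deg C v) 1%N) => dv1; last by rewrite big1 // => e _; rewrite andbF.
have [/exists_inP[e0 e0C B0v] | /exists_inPn h] := boolP [exists e in C, B e v != 0%R].
  have -> : sumB C B v = B e0 v.
    rewrite /sumB sum_ffunE (bigD1 e0) //= big1 ?addr0 // => e /andP[eC ne].
    apply/eqP/negP => /negP Bev.
    have := edge_deg_ge2 e0C eC ne (assignment_supp BC B0v) (assignment_supp BC Bev).
    by rewrite dv1.
  rewrite B0v; apply: (@leq_trans (edge_deg C v)); last by rewrite dv1.
  apply: leq_sum => e eC; rewrite andbT inE.
  by case Bev: (B e v != 0%R); rewrite //= (assignment_supp BC Bev).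
by rewrite big1 // => e eC; rewrite inE (negbTE (h e eC)).
Qed.

Lemma card_le_weight_shared : (3 * #|C| <= w + \sum_(e in C) #|shared C e|)%N.
Proof.
apply: leq_trans _ (leq_add sum_private_supp_le_weight (leqnn _)).
rewrite -big_split /= mulnC -sum_nat_const; apply: leq_sum => e eC.
have := assignmentsP e BC; rewrite eC => /andP[/subsetP supp_e supp3].
apply: leq_trans supp3 (leq_trans _ (leq_card_setU _ _)); apply: subset_leq_card.
apply/subsetP => v vS; have ve : v \in e by have := supp_e v vS; rewrite inE.
have : (0 < edge_deg C v)%N by rewrite /edge_deg (bigD1 e) //= ve.
move: vS; rewrite in_setU !inE => -> /=; rewrite ve /=.
by case: (edge_deg C v) => [|[|]].
Qed.

Hypotheses (uniqC : forall e, e \in C -> uniq e)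
  (acycC : Rle (Rmult (INR #|C|) (Rminus (INR k) (Rdiv (INR 11) (INR 10))))
               (INR #|covered C|)).

Lemma excess_le : (10 * excess C <= 11 * #|C|)%N.
Proof.
have deg_sum : (k * #|C| = excess C + #|covered C|)%N.
  rewrite -sum_edge_deg // card_covered /excess -big_split /=.
  by apply: eq_bigr => v _; case: (edge_deg C v) => // n; rewrite addn1.
suff : (10 * k * #|C| <= 10 * #|covered C| + 11 * #|C|)%N by lia.
apply/ssrnat.leP; apply: INR_le; rewrite !plus_INR !mult_INR.
move: acycC; rewrite /Rdiv /Rminus !INR_IZR_INZ /=; lra.
Qed.

Lemma weight_lower_bound : (4 * #|C| <= 5 * w)%N.
Proof.
have := card_le_weight_shared; have := sum_shared_le_excess C; have := excess_le; lia.
Qed.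

Lemma weight_ge2 : (0 < #|C|)%N -> (2 <= w)%N.
Proof.
move=> c0; have := weight_lower_bound; case: (leqP #|C| 1) => [c1|]; last by lia.
have := card_le_weight_shared; rewrite big1 => [|e _]; last by rewrite shared_small ?cards0.
by lia.
Qed.

End WeightLowerBound.

Lemma hweight_add_disjoint (x y : Vec) : (forall v, x v != 0%R -> y v = 0%R) ->
  hweight (x + y)%R = (hweight x + hweight y)%N.
Proof.
move=> xy; rewrite /hweight !card_set_sum -big_split /=; apply: eq_bigr => v _.
rewrite ffunE; have [xv|/negPn/eqP ->] := boolP (x v != 0%R); last by rewrite add0r.
by rewrite (xy v xv) addr0 xv.
Qed.

Definition restrict A B : {ffun T -> Vec} := [ffun e => if e \in A then B e else 0%R].

Lemma restrict_assignments A A' B :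
  A \subset A' -> B \in assignments A' -> restrict A B \in assignments A.
Proof.
move=> sA BA; rewrite inE; apply/forallP => e; rewrite ffunE.
case eA: (e \in A); last by rewrite eqxx.
by have := assignmentsP e BA; rewrite (subsetP sA e eA).
Qed.

Lemma sumB_restrict A B : sumB A (restrict A B) = sumB A B.
Proof. by apply: eq_bigr => e eA; rewrite ffunE eA. Qed.

Lemma restrict_split C A B : C \subset A -> B \in assignments A ->
  B = [ffun e => (restrict C B e + restrict (A :\: C) B e)%R].
Proof.
move=> CA BA; apply/ffunP => e; rewrite !ffunE in_setD.
case eC: (e \in C); first by rewrite (subsetP CA e eC) /= addr0.
case eA: (e \in A) => /=; first by rewrite add0r.
by rewrite addr0; have := assignmentsP e BA; rewrite eA => /eqP.
Qed.

(* An assignment is determined by the values of each [B e] at the [k] entries of [e]. *)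
Lemma card_assignments C : (1 < N)%N -> (#|assignments C| <= (N ^ k) ^ #|C|)%N.
Proof.
move=> N2.
pose g B : {ffun T -> {ffun 'I_k -> 'Z_N}} := [ffun e => [ffun i => B e (tnth e i)]].
have ginj : {in assignments C &, injective g}.
  move=> B B' BC B'C /ffunP gB; apply/ffunP => e; apply/ffunP => v.
  have := gB e; rewrite !ffunE => /ffunP gBe.
  have [/tnthP[i ->]|ve] := boolP (v \in e); first by have := gBe i; rewrite !ffunE.
  have /eqP -> : B e v == 0%R by apply: contraNT ve => /(assignment_supp BC).
  by have /eqP -> : B' e v == 0%R by apply: contraNT ve => /(assignment_supp B'C).
rewrite -(card_in_imset ginj).
have -> : (N ^ k)%N = #|[set: {ffun 'I_k -> 'Z_N}]|.
  by rewrite cardsT card_ffun !card_ord Zp_cast.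
rewrite -(card_pffun_on (0%R : {ffun 'I_k -> 'Z_N}) (mem C)).
apply: subset_leq_card; apply/subsetP => _ /imsetP[B BC ->].
apply/pffun_onP; split=> [|x _]; last by rewrite inE.
apply/subsetP => e; rewrite inE; apply: contraNT => eC.
have := assignmentsP e BC; rewrite (negbTE eC) => /eqP Be0.
by apply/eqP/ffunP => i; rewrite !ffunE Be0 ffunE.
Qed.

Lemma card_B_l_le l E' :
  (#|B_l N l E'| <= #|[set B in assignments E' | hweight (sumB E' B) == l]|)%N.
Proof.
pose ext (B : {ffun edges_of E' -> Vec}) : {ffun T -> Vec} :=
  [ffun e => if (insub e : option (edges_of E')) is Some e' then B e' else 0%R].
have ext_inj : injective ext.
  by move=> B B' /ffunP h; apply/ffunP => x; have := h (val x); rewrite !ffunE valK.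
rewrite -(card_imset _ ext_inj); apply: subset_leq_card; apply/subsetP.
move=> _ /imsetP[B + ->]; rewrite !inE => /andP[isB hw]; apply/andP; split.
  apply/forallP => e; rewrite ffunE.
  case: insubP => [x ex vx|ne]; last by rewrite (negbTE ne) eqxx.
  by rewrite ex; have := forallP isB x; rewrite vx.
suff -> : sumB E' (ext B) = SigmaB B by [].
by rewrite /sumB big_sub /SigmaB; apply: eq_bigr => x _; rewrite ffunE valK.
Qed.

Lemma sumB_splitD C A B : C \subset A -> sumB A B = (sumB C B + sumB (A :\: C) B)%R.
Proof.
move=> CA; rewrite /sumB (bigID (mem C)) /=; congr (_ + _)%R.
  by apply: eq_bigl => e; case eC: (e \in C); rewrite ?andbT ?andbF ?(subsetP CA e eC).
by apply: eq_bigl => e; rewrite in_setD andbC.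
Qed.

(* Edges in different components share no vertex, so their supports cannot cancel. *)
Lemma hweight_sumB_component A B r : r \in A -> B \in assignments A ->
  let C := component incident_rel A r in
  hweight (sumB A B) = (hweight (sumB C B) + hweight (sumB (A :\: C) B))%N.
Proof.
move=> rA BA C; have CA : C \subset A by apply: component_sub.
rewrite (sumB_splitD _ CA) hweight_add_disjoint // => v /sumB_neq0[e eC Bev].
apply/eqP/negP => /negP /sumB_neq0[e' e'D Be'v].
move: e'D; rewrite in_setD => /andP[/negP e'C e'A]; apply: e'C.
apply: (component_closed eC e'A (subsetP CA e eC)).
by apply/hasP; exists v; [exact: (assignment_supp BA Bev) | exact: (assignment_supp BA Be'v)].
Qed.

Section GeneratingFunction.
Variables (E : {set T}) (R : realFieldType) (u z a : R) (d : nat).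
Local Open Scope ring_scope.
Hypotheses (uniqE : forall e, e \in E -> uniq e) (acycE : almost_acyclic E)
  (u_ge0 : 0 <= u) (u_le1 : u <= 1) (z_ge0 : 0 <= z) (z_le1 : z <= 1) (a_ge0 : 0 <= a)
  (N_gt1 : (1 < N)%N) (tree_cond : (N ^ k)%:R * z * (1 + a) ^+ d <= a)
  (deg_le : forall e, e \in E -> (#|nbhd incident_rel E e| <= d)%N).

Definition gweight (p : {set T} * {ffun T -> Vec}) : R :=
  u ^+ hweight (sumB p.1 p.2) * z ^+ #|p.1|.
Definition genfun (U : {set T}) :=
  \sum_(p : {set T} * {ffun T -> Vec} | (p.1 \subset U) && (p.2 \in assignments p.1)) gweight p.

Lemma gweight_ge0 p : 0 <= gweight p.
Proof. by rewrite mulr_ge0 ?exprn_ge0. Qed.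

Lemma genfun_ge0 U : 0 <= genfun U.
Proof. by apply: sumr_ge0 => p _; exact: gweight_ge0. Qed.

Lemma genfun_set0 : genfun set0 = 1.
Proof.
rewrite /genfun (big_pred1 ((set0 : {set T}), (0%R : {ffun T -> Vec}))) /=.
  rewrite /gweight /sumB /= big_set0 cards0 expr0 mulr1.
  suff -> : hweight (0%R : Vec) = 0%N by rewrite expr0.
  by rewrite /hweight card_set_sum big1 // => v _; rewrite ffunE eqxx.
move=> [A B] /=; apply/idP/idP; last first.
  by move/eqP => [-> ->]; rewrite sub0set /= inE; apply/forallP => e; rewrite inE ffunE eqxx.
case/andP; rewrite subset0 => /eqP -> BA; apply/eqP; congr (_, _); apply/ffunP => e.
by have := assignmentsP e BA; rewrite inE ffunE => /eqP.
Qed.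

Let uniq_sub C (CE : C \subset E) e (eC : e \in C) : uniq e := uniqE (subsetP CE e eC).

Let y := (N ^ k)%:R * z.

Lemma y_ge0 : 0 <= y.
Proof. by rewrite mulr_ge0 ?ler0n. Qed.

(* Each connected piece carries at least [u ^+ 2], and at most [(N ^ k) ^ #|C|]
   assignments, which turns [z] into [y]. *)
Lemma genfun_connected_le U r : U \subset E ->
  \sum_(q : {set T} * {ffun T -> Vec} |
        ((q.1 \subset U) && rooted_connected incident_rel q.1 r) && (q.2 \in assignments q.1))
    gweight q
  <= u ^+ 2 * conn_weight incident_rel y U r.
Proof.
move=> UE; set lhs := (X in X <= _).
have -> : lhs = \sum_(C : {set T} | (C \subset U) && rooted_connected incident_rel C r)
                 \sum_(B in assignments C) gweight (C, B).
  by rewrite pair_big_dep; apply: eq_bigr => -[].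
rewrite /conn_weight mulr_sumr.
apply: ler_sum => C /andP[CU cC].
have CE : C \subset E by apply: subset_trans CU UE.
have c0 : (0 < #|C|)%N by apply/card_gt0P; exists r; case/andP: cC.
apply: le_trans (_ : \sum_(B in assignments C) (u ^+ 2 * z ^+ #|C|) <= _).
  apply: ler_sum => B BC; apply: ler_wpM2r; first exact: exprn_ge0.
  by apply: ler_wiXn2l => //; apply: weight_ge2 BC (uniq_sub CE) (acycE CE) c0.
rewrite sumr_const -mulr_natr /y exprMn -natrX [_%:R * _]mulrC -mulrA.
apply: ler_wpM2l (exprn_ge0 _ u_ge0) _ _ _; apply: ler_wpM2l (exprn_ge0 _ z_ge0) _ _ _.
by rewrite ler_nat card_assignments.
Qed.

Lemma gweight_component A B r : r \in A -> B \in assignments A ->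
  let C := component incident_rel A r in
  gweight (A, B) = gweight (C, restrict C B) * gweight (A :\: C, restrict (A :\: C) B).
Proof.
move=> rA BA C; have CA : C \subset A by apply: component_sub.
rewrite /gweight /= !sumB_restrict (hweight_sumB_component rA BA).
by rewrite -(cardsID C A) (setIidPr CA) !exprD mulrACA.
Qed.

Lemma genfun_splitD1 U r : U \subset E -> r \in U ->
  genfun U <= genfun (U :\ r) * (1 + u ^+ 2 * conn_weight incident_rel y U r).
Proof.
move=> UE rU.
rewrite mulrDr mulr1 /genfun (bigID (fun p : {set T} * {ffun T -> Vec} => r \in p.1)) /=.
rewrite addrC; apply: lerD.
  by rewrite le_eqVlt; apply/orP; left; apply/eqP; apply: eq_bigl => p; rewrite subsetD1 andbAC.
rewrite mulrC; apply: le_trans (ler_wpM2r (genfun_ge0 (U :\ r)) (genfun_connected_le r UE)).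
rewrite /genfun big_distrlr pair_big_dep /=.
pose peel (p : {set T} * {ffun T -> Vec}) :=
  let C := component incident_rel p.1 r in
  ((C, restrict C p.2), (p.1 :\: C, restrict (p.1 :\: C) p.2)).
rewrite (eq_bigr (fun p => gweight (peel p).1 * gweight (peel p).2)); last first.
  by move=> [A B] /= /andP[/andP[_ BA] rA]; rewrite (gweight_component rA BA).
apply: (ler_sum_inj (h := peel) (F := fun q => gweight q.1 * gweight q.2)).
- move=> [A B] [A' B'] /= /andP[/andP[_ BA] rA] /andP[/andP[_ B'A'] rA'] [e1 e2 e3 e4].
  have CA : component incident_rel A r \subset A := component_sub _ rA.
  have CA' : component incident_rel A' r \subset A' := component_sub _ rA'.
  have eA : A = A' by rewrite -(setDUK CA) -(setDUK CA') e3 e1.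
  have BA1 : B \in assignments A := BA; have B'A'1 : B' \in assignments A' := B'A'.
  by rewrite (restrict_split CA BA1) (restrict_split CA' B'A'1) e2 e4 eA.
- move=> [A B] /= /andP[/andP[AU BA] rA].
  have CA : component incident_rel A r \subset A := component_sub _ rA.
  rewrite (restrict_assignments CA BA) (restrict_assignments (subsetDl A _) BA).
  rewrite component_connected // (subset_trans CA AU) subsetD1.
  by rewrite (subset_trans (subsetDl _ _) AU) in_setD inE connect0.
- by move=> q _; rewrite mulr_ge0 ?gweight_ge0.
Qed.

Lemma genfun_le U : U \subset E -> genfun U <= (1 + u ^+ 2 * a) ^+ #|U|.
Proof.
elim: {U}#|U| {-2}U (leqnn #|U|) => [|n IH] U.
  by rewrite leqn0 => /eqP/cards0_eq -> _; rewrite genfun_set0 cards0 expr0.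
move=> cU UE; have [->|[r rU]] := set_0Vmem U; first by rewrite genfun_set0 cards0 expr0.
apply: le_trans (genfun_splitD1 UE rU) _.
have cUr : (#|U :\ r| <= n)%N by move: cU; rewrite (cardsD1 r U) rU.
rewrite (cardsD1 r U) rU add1n [(1 + u ^+ 2 * a) ^+ _]exprSr.
apply: ler_pM; rewrite ?genfun_ge0 ?addr_ge0 ?mulr_ge0 ?exprn_ge0 ?conn_weight_ge0 ?y_ge0 //.
  exact: IH cUr (subset_trans (subsetDl _ _) UE).
rewrite lerD2l; apply: ler_wpM2l; first exact: exprn_ge0.
exact: (conn_weight_le (inc := incident_rel) y_ge0 a_ge0 tree_cond deg_le UE rU).
Qed.

(* An assignment of weight [l] has at most [5l/4 <= 2l] edges, so carries weight
   at least [u ^+ l * z ^+ (2 * l)]. *)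
Lemma count_B_l_le l :
  u ^+ l * z ^+ (2 * l) * (\sum_(E' : {set T} | E' \subset E) #|B_l N l E'|)%:R
  <= (1 + u ^+ 2 * a) ^+ #|E|.
Proof.
pose X E' := [set B in assignments E' | hweight (sumB E' B) == l].
apply: le_trans (genfun_le (subxx E)).
apply: le_trans (_ : u ^+ l * z ^+ (2 * l) * (\sum_(E' : {set T} | E' \subset E) #|X E'|)%:R <= _).
  apply: ler_wpM2l; first by rewrite mulr_ge0 ?exprn_ge0.
  by rewrite ler_nat; apply: leq_sum => E' _; apply: card_B_l_le.
rewrite natr_sum mulr_sumr (eq_bigr (fun E' => \sum_(B in X E') u ^+ l * z ^+ (2 * l))); last first.
  by move=> E' _; rewrite sumr_const mulr_natr.
rewrite pair_big_dep /=.
apply: (le_trans _ (ler_sum_inj (h := id) (F := gweight) _ _ _)) => //=.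
- apply: ler_sum => -[A B] /= /andP[AE]; rewrite inE => /andP[BA /eqP hw].
  rewrite /gweight /= hw; apply: ler_wpM2l; first exact: exprn_ge0.
  apply: ler_wiXn2l => //; rewrite -(@leq_pmul2l 4) // -hw.
  by apply: leq_trans (weight_lower_bound BA (uniq_sub AE) (acycE AE)) _; lia.
- by move=> -[A B] /= /andP[AE]; rewrite inE => /andP[BA _]; rewrite AE BA.
- by move=> p _; exact: gweight_ge0.
Qed.

End GeneratingFunction.

End Hypergraph.

Section RealBounds.
Local Open Scope R_scope.

Lemma Rinv_ge1_bounds x : 1 <= x -> 0 <= / x <= 1.
Proof.
move=> x1; split; first by left; apply: Rinv_0_lt_compat; lra.
by rewrite -Rinv_1; apply: Rinv_le_contravar; lra.
Qed.

Lemma exp_le_compat x y : x <= y -> exp x <= exp y.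
Proof. by case/Rle_lt_or_eq_dec => [/exp_increasing|->]; lra. Qed.

Lemma exp_INR_mul (n : nat) (x : R) : exp (INR n * x) = exp x ^ n.
Proof.
elim: n => [|n IH]; first by rewrite Rmult_0_l exp_0.
by rewrite S_INR Rmult_plus_distr_r Rmult_1_l exp_plus IH /=; ring.
Qed.

Lemma one_plus_pow_le_exp (x : R) (n : nat) : 0 <= x -> (1 + x) ^ n <= exp (INR n * x).
Proof.
move=> x0; rewrite exp_INR_mul; apply: pow_incr; split; [lra | exact: exp_ineq1_le].
Qed.

Lemma exp_INR_le_pow3 (l : nat) : exp (INR l) <= 3 ^ l.
Proof.
rewrite -(Rmult_1_r (INR l)) exp_INR_mul; apply: pow_incr.
by split; [left; apply: exp_pos | apply: exp_le_3].
Qed.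

Lemma one_plus_inv_pow_le3 (d : nat) : (1 <= d)%N -> (1 + / INR d) ^ d <= 3.
Proof.
move=> d1; have d0 : 0 < INR d by apply: lt_0_INR; lia.
apply: Rle_trans (one_plus_pow_le_exp _ _) _; first by left; apply: Rinv_0_lt_compat.
by rewrite Rinv_r; [apply: exp_le_3 | lra].
Qed.

(* With [z = 1 / (3 d N^k)] and [a = 1 / d]: [N^k z (1 + a)^d <= (1 + 1/d)^d / (3 d) <= a]. *)
Lemma tree_condition (d Nk : nat) : (1 <= d)%N -> (1 <= Nk)%N ->
  INR Nk * / (3 * (INR d * INR Nk)) * (1 + / INR d) ^ d <= / INR d.
Proof.
move=> d1 Nk1; have d0 : 1 <= INR d by apply: (le_INR 1); lia.
have Nk0 : 1 <= INR Nk by apply: (le_INR 1); lia.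
have -> : INR Nk * / (3 * (INR d * INR Nk)) = / INR d * / 3 by field; lra.
have := one_plus_inv_pow_le3 d1; have : 0 < / INR d by apply: Rinv_0_lt_compat; lra.
nra.
Qed.

Lemma compound_le_pow3 (d l m : nat) : (1 <= d)%N -> (1 <= l)%N -> (l <= m)%N ->
  (1 + INR l / INR m * / INR d) ^ m <= 3 ^ l.
Proof.
move=> d1 l1 lm; have d0 : 1 <= INR d by apply: (le_INR 1); lia.
have l0 : 0 < INR l by apply: lt_0_INR; lia.
have m0 : INR l <= INR m by apply: le_INR; lia.
have [id0 id1] := Rinv_ge1_bounds d0.
apply: Rle_trans (one_plus_pow_le_exp _ _) (Rle_trans _ _ _ _ (exp_INR_le_pow3 l)).
  by apply: Rmult_le_pos => //; apply: Rmult_le_pos; [|left; apply: Rinv_0_lt_compat]; lra.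
apply: exp_le_compat.
have -> : INR m * (INR l / INR m * / INR d) = INR l * / INR d by field; lra.
by nra.
Qed.

Lemma B_bound_baseE (d l m Nk : nat) : (1 <= d)%N -> (1 <= l)%N -> (1 <= m)%N ->
  (1 <= Nk)%N ->
  Rpower ((15 * INR d * INR Nk) ^ 4 * INR m / INR l) (INR l / 2)
  = (sqrt (INR m / INR l) * (225 * (INR d * INR Nk) ^ 2)) ^ l.
Proof.
move=> d1 l1 m1 Nk1; have d0 : 1 <= INR d by apply: (le_INR 1); lia.
have Nk0 : 1 <= INR Nk by apply: (le_INR 1); lia.
have l0 : 0 < INR l by apply: lt_0_INR; lia.
have m0 : 0 < INR m by apply: lt_0_INR; lia.
have ml0 : 0 < INR m / INR l by apply: Rdiv_lt_0_compat.
have X0 : 0 < 225 * (INR d * INR Nk) ^ 2 by apply: Rmult_lt_0_compat; [lra | apply: pow_lt; nra].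
rewrite (_ : INR l / 2 = / 2 * INR l); last by field.
rewrite (_ : (15 * INR d * INR Nk) ^ 4 * INR m / INR l
             = (225 * (INR d * INR Nk) ^ 2) ^ 2 * (INR m / INR l)); last by field; lra.
rewrite -Rpower_mult Rpower_sqrt; last by apply: Rmult_lt_0_compat => //; apply: pow_lt.
rewrite Rpower_pow; last by apply: sqrt_lt_R0; apply: Rmult_lt_0_compat => //; apply: pow_lt.
rewrite sqrt_mult_alt ?sqrt_pow2; [by rewrite Rmult_comm | lra | apply: pow2_ge_0].
Qed.

Lemma sqrt_ratio_ge1 (l m : nat) : (1 <= l)%N -> (l <= m)%N -> 1 <= sqrt (INR m / INR l).
Proof.
move=> l1 lm; rewrite -sqrt_1; apply: sqrt_le_1_alt.
have l0 : 0 < INR l by apply: lt_0_INR; lia.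
have : INR l <= INR m by apply: le_INR; lia.
by move=> lm'; apply: (Rmult_le_reg_r (INR l)) => //; rewrite /Rdiv Rmult_assoc Rinv_l; lra.
Qed.

Lemma B_bound_of_weighted_count (S d l m Nk : nat) :
  (1 <= d)%N -> (1 <= l)%N -> (l <= m)%N -> (1 <= Nk)%N ->
  let X := INR d * INR Nk in let s := sqrt (INR m / INR l) in
  (/ s) ^ l * (/ (3 * X)) ^ (2 * l) * INR S <= (1 + (/ s) ^ 2 * / INR d) ^ m ->
  INR S <= Rpower ((15 * INR d * INR Nk) ^ 4 * INR m / INR l) (INR l / 2).
Proof.
move=> d1 l1 lm Nk1 X s H.
have m1 : (1 <= m)%N by lia.
have d0 : 1 <= INR d by apply: (le_INR 1); lia.
have Nk0 : 1 <= INR Nk by apply: (le_INR 1); lia.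
have X1 : 1 <= X by rewrite /X; nra.
have s1 : 1 <= s := sqrt_ratio_ge1 l1 lm.
have s2 : (/ s) ^ 2 = INR l / INR m.
  have l0 : 0 < INR l by apply: lt_0_INR; lia.
  have m0 : 0 < INR m by apply: lt_0_INR; lia.
  rewrite pow_inv /s /= Rmult_1_r sqrt_sqrt; first by field; lra.
  by apply: Rlt_le; apply: Rdiv_lt_0_compat.
rewrite (B_bound_baseE d1 l1 m1 Nk1) -/X -/s.
set P := (s * (3 * X) ^ 2) ^ l.
have P0 : 0 < P by apply: pow_lt; apply: Rmult_lt_0_compat; [lra | apply: pow_lt; lra].
apply: Rle_trans (_ : P * 3 ^ l <= _).
  apply: (Rmult_le_reg_l (/ P)); first exact: Rinv_0_lt_compat.
  rewrite -Rmult_assoc Rinv_l ?Rmult_1_l; last lra.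
  apply: Rle_trans (compound_le_pow3 d1 l1 lm); rewrite -s2; apply: Rle_trans H.
  rewrite /P -pow_inv pow_mult -Rpow_mult_distr.
  by rewrite (_ : / (s * (3 * X) ^ 2) = / s * (/ (3 * X)) ^ 2); [lra | field; lra].
rewrite /P -Rpow_mult_distr; apply: pow_incr.
have X2 : 1 <= X ^ 2 by nra.
by split; nra.
Qed.

End RealBounds.

Section StdlibSpecialization.
Local Open Scope R_scope.

Lemma count_B_l_le_R (V : finType) (k N d l : nat) (E : {set k.-tuple V}) (u z a : R) :
  (forall e, e \in E -> uniq e) -> almost_acyclic E ->
  (forall e, e \in E -> (#|nbhd (@incident_rel V k) E e| <= d)%N) -> (1 < N)%N ->
  0 <= u <= 1 -> 0 <= z <= 1 -> 0 <= a -> INR (N ^ k) * z * (1 + a) ^ d <= a ->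
  u ^ l * z ^ (2 * l) * INR (\sum_(E' : {set k.-tuple V} | E' \subset E) #|B_l N l E'|)
  <= (1 + u ^ 2 * a) ^ #|E|.
Proof.
move=> uniqE acycE degE N2 [/RleP u0 /RleP u1] [/RleP z0 /RleP z1] /RleP a0.
rewrite RpowE INRE !RmultE RplusE R1E => /RleP tree.
have /RleP := count_B_l_le uniqE acycE u0 u1 z0 z1 a0 N2 tree degE l.
by rewrite -!RpowE -INRE -!RmultE -RplusE -R1E.
Qed.

End StdlibSpecialization.

Theorem lemma7p11 (N k d l m : nat) (V : finType) (E : {set k.-tuple V}) :
  leq 2 N -> leq 1 d -> leq 1 l -> leq 1 m -> leq l m ->
  (forall e, e \in E -> uniq e) ->
  almost_acyclic E ->
  #|E| = m ->
  (forall e, e \in E -> leq #|[set f in E | (f != e) && incident e f]| d) ->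
  Rle (INR (\sum_(E' : {set k.-tuple V} | E' \subset E) #|B_l N l E'|))
      (B_bound d N k m l).
Proof.
move=> N2 d1 l1 _ lm uniqE acycE cardE degE; subst m.
have Nk1 : (1 <= N ^ k)%N by rewrite expn_gt0; lia.
have d_ge1 : Rle 1 (INR d) by apply: (le_INR 1); lia.
have X_ge1 : Rle 1 (Rmult (INR d) (INR (N ^ k))).
  by have /= := le_INR 1 _ (ssrnat.leP Nk1); nra.
have pow_NkE : pow (INR N) k = INR (N ^ k) by rewrite !INRE natrX RpowE.
rewrite /B_bound pow_NkE; apply: (B_bound_of_weighted_count d1 l1 lm Nk1).
apply: count_B_l_le_R uniqE acycE degE N2 _ _ _ _.
- exact: Rinv_ge1_bounds (sqrt_ratio_ge1 l1 lm).
- by apply: Rinv_ge1_bounds; lra.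
- by left; apply: Rinv_0_lt_compat; lra.
- exact: tree_condition.
Qed.
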